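(* Let $\mathcal F$ be a sheaf on a digraph $G$. For all subspaces $U_1,U_2\subset\mathcal F(V)$, $${\rm excess}(\mathcal F,U_1)+{\rm excess}(\mathcal F,U_2)\le{\rm excess}(\mathcal F,U_1\cap U_2)+{\rm excess}(\mathcal F,U_1+U_2).$$ Consequently the set of subspaces $U\subset\mathcal F(V)$ with ${\rm excess}(\mathcal F,U)={\rm m.e.}(\mathcal F)$ is closed under intersection and sum (so has a unique maximal and a unique minimal element), and for any two such maximizers $U_1,U_2$ one has $\Gamma_{\rm ht}(U_1+U_2)=\Gamma_{\rm ht}(U_1)+\Gamma_{\rm ht}(U_2)$.
   Context: A digraph has finite vertex and edge sets with tail/head maps. A sheaf $\mathcal F$ on $G$: finite-dimensional $\mathbb F$-vector spaces $\mathcal F(P)$, $P\in V_G\sqcup E_G$, with linear maps $\mathcal F(t,e)\colon\mathcal F(e)\to\mathcal F(t_Ge)$, $\mathcal F(h,e)\colon\mathcal F(e)\to\mathcal F(h_Ge)$; $\mathcal F(V)=\bigoplus_v\mathcal F(v)$, $\mathcal F(E)=\bigoplus_e\mathcal F(e)$; $d_h,d_t\colon\mathcal F(E)\to\mathcal F(V)$ send the summand $\mathcal F(e)$ into $\mathcal F(h_Ge)$ resp. $\mathcal F(t_Ge)$ via the restriction maps. For $U\subset\mathcal F(V)$, $\Gamma_{\rm ht}(U)=\bigoplus_e\{w\in\mathcal F(e):d_hw\in U,\ d_tw\in U\}\subset\mathcal F(E)$, ${\rm excess}(\mathcal F,U)=\dim\Gamma_{\rm ht}(U)-\dim U$, ${\rm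 m.e.}(\mathcal F)=\max_U{\rm excess}(\mathcal F,U)$. *)

From HB Require Import structures.
From mathcomp Require Import all_boot all_order all_algebra.
Set Implicit Arguments. Unset Strict Implicit. Unset Printing Implicit Defensive.
Import Order.TTheory GRing.Theory Num.Theory.
Local Open Scope ring_scope.

Record digraph := Digraph {
  vert : finType;
  edge : finType;
  tailG : edge -> vert;
  headG : edge -> vert }.

(* F(V) = (+)_v F(v) and F(E) = (+)_e F(e) are represented as finite-dimensional
   K-spaces FV, FE together with internal direct-sum decompositions into the
   stalks stalkV v, stalkE e.  The maps d_h, d_t : F(E) -> F(V) are linear maps
   sending the summand F(e) into F(h e), resp. F(t e); their restrictions to
   F(e) are the restriction maps F(h,e), F(t,e). *)
Record sheaf (K : fieldType) (G : digraph) := Sheaf {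
  FV : vectType K;
  FE : vectType K;
  stalkV : vert G -> {vspace FV};
  stalkE : edge G -> {vspace FE};
  stalkV_direct : directv (\sum_(v : vert G) stalkV v)%VS;
  stalkV_full : (\sum_(v : vert G) stalkV v)%VS = fullv;
  stalkE_direct : directv (\sum_(e : edge G) stalkE e)%VS;
  stalkE_full : (\sum_(e : edge G) stalkE e)%VS = fullv;
  d_h : 'Hom(FE, FV);
  d_t : 'Hom(FE, FV);
  d_h_stalk : forall e, (d_h @: stalkE e <= stalkV (headG e))%VS;
  d_t_stalk : forall e, (d_t @: stalkE e <= stalkV (tailG e))%VS }.

Definition Gamma_ht K G (S : sheaf K G) (U : {vspace FV S}) : {vspace FE S} :=
  (\sum_(e : edge G) (stalkE S e :&: (d_h S @^-1: U) :&: (d_t S @^-1: U)))%VS.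

Definition excess K G (S : sheaf K G) (U : {vspace FV S}) : int :=
  (\dim (Gamma_ht U))%:Z - (\dim U)%:Z.

Definition max_excess K G (S : sheaf K G) (U : {vspace FV S}) : Prop :=
  forall U' : {vspace FV S}, excess U' <= excess U.

From HB Require Import structures.
From mathcomp Require Import all_boot all_order all_algebra.
From mathcomp Require Import zify.
From Stdlib Require Import Classical.
Import Order.TTheory GRing.Theory Num.Theory.
Local Open Scope ring_scope.

(* Gamma_ht(U) is the direct sum over the edges e of the local spaces
   Gamma_e(U) = { w in F(e) : d_h w in U, d_t w in U }.  Each Gamma_e commutes
   with intersections, and since the sum over e is direct, so does Gamma_ht:
   Gamma_ht(U1) :&: Gamma_ht(U2) = Gamma_ht(U1 :&: U2).  As Gamma_ht is
   monotone, Gamma_ht(U1) + Gamma_ht(U2) <= Gamma_ht(U1 + U2), and Grassmann's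
   formula on both F(E) and F(V) yields the supermodular inequality for excess.
   For two maximizers U1, U2 the inequality forces U1 :&: U2 and U1 + U2 to be
   maximizers too, and turns the inclusion above into an equality of dimensions,
   hence of spaces.  Excess is bounded by dim F(E), so maximizers exist, and
   choosing one of largest (resp. smallest) dimension gives the greatest (resp.
   least) maximizer. *)

Lemma directv_sub (K : fieldType) (vT : vectType K) (I : finType)
    (U V : I -> {vspace vT}) :
  (forall i, (V i <= U i)%VS) -> directv (\sum_i U i) -> directv (\sum_i V i).
Proof.
move=> sVU /directv_sum_independent dU; apply/directv_sum_independent.
move=> us Vu sum0 i _; apply: dU => // j _.
exact: (subvP (sVU j)) (Vu j isT).
Qed.

Lemma bounded_argmax (T : Type) (f : T -> nat) (N : nat) (x0 : T) :
  (forall x, (f x <= N)%N) -> exists x, forall y, (f y <= f x)%N.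
Proof.
move=> f_le; suff gap_ind k x : (N - f x <= k)%N -> exists x, forall y, (f y <= f x)%N.
  exact: (gap_ind _ x0 (leqnn _)).
elim: k x => [|k IHk] x gap_x.
  by exists x => y; have := f_le y; have := f_le x; lia.
have [x_max|/not_all_ex_not [y /negP]] := classic (forall y, (f y <= f x)%N).
  by exists x.
rewrite -ltnNge => lt_xy; apply: (IHk y); have := f_le y; lia.
Qed.

Section SheafGamma.
Variables (K : fieldType) (G : digraph) (S : sheaf K G).
Implicit Types U V : {vspace FV S}.

Definition Gamma_e U (e : edge G) : {vspace FE S} :=
  (stalkE S e :&: (d_h S @^-1: U) :&: (d_t S @^-1: U))%VS.

Lemma mem_Gamma_e U e w :
  (w \in Gamma_e U e) = [&& w \in stalkE S e, d_h S w \in U & d_t S w \in U].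
Proof. by rewrite /Gamma_e !memv_cap -!memv_preim andbA. Qed.

(* Gamma_e(U) lies in the stalk at e, so the sum over edges is direct. *)
Lemma Gamma_e_stalk U e : (Gamma_e U e <= stalkE S e)%VS.
Proof. by rewrite /Gamma_e -capvA capvSl. Qed.

Lemma Gamma_e_cap U V e : Gamma_e (U :&: V) e = (Gamma_e U e :&: Gamma_e V e)%VS.
Proof.
apply/vspaceP => w; rewrite memv_cap !mem_Gamma_e !memv_cap.
by case: (w \in stalkE S e) (d_h S w \in U) (d_h S w \in V)
          (d_t S w \in U) (d_t S w \in V) => [] [] [] [] [].
Qed.

Lemma Gamma_monotone U V : (U <= V)%VS -> (Gamma_ht U <= Gamma_ht V)%VS.
Proof.
move=> sUV; apply/subv_sumP => e _; apply: (sumv_sup e) => //.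
by rewrite /Gamma_e !capvS ?lpreimS.
Qed.

(* Sums of local spaces over the edges are direct, since the stalks are. *)
Lemma dim_sum_edges (W : edge G -> {vspace FE S}) :
  (forall e, (W e <= stalkE S e)%VS) ->
  \dim (\sum_e W e) = (\sum_e \dim (W e))%N.
Proof.
by move=> sWE; apply/directvP; apply: directv_sub sWE (stalkE_direct S).
Qed.

Lemma Gamma_cap U V : (Gamma_ht U :&: Gamma_ht V)%VS = Gamma_ht (U :&: V).
Proof.
apply/eqP; rewrite eq_sym eqEdim subv_cap !Gamma_monotone ?capvSl ?capvSr //=.
have dimGE W : \dim (Gamma_ht W) = (\sum_e \dim (Gamma_e W e))%N.
  exact/dim_sum_edges/Gamma_e_stalk.
have dim_add : \dim (Gamma_ht U + Gamma_ht V) =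
               (\sum_e \dim (Gamma_e U e + Gamma_e V e))%N.
  by rewrite /Gamma_ht -big_split; apply: dim_sum_edges => e;
     rewrite subv_add !Gamma_e_stalk.
have local_grassmann : (\sum_e (\dim (Gamma_e U e) + \dim (Gamma_e V e)))%N =
    (\sum_e (\dim (Gamma_e U e + Gamma_e V e) + \dim (Gamma_e (U :&: V) e)))%N.
  by apply: eq_bigr => e _; rewrite Gamma_e_cap dimv_sum_cap.
have := dimv_sum_cap (Gamma_ht U) (Gamma_ht V).
rewrite dim_add !dimGE; move: local_grassmann; rewrite !big_split /=; lia.
Qed.

Lemma Gamma_add_sub U V : (Gamma_ht U + Gamma_ht V <= Gamma_ht (U + V))%VS.
Proof. by rewrite subv_add !Gamma_monotone ?addvSl ?addvSr. Qed.

Lemma dim_Gamma_grassmann U V :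
  (\dim (Gamma_ht U) + \dim (Gamma_ht V) =
   \dim (Gamma_ht U + Gamma_ht V) + \dim (Gamma_ht (U :&: V)))%N.
Proof. by rewrite -Gamma_cap dimv_sum_cap. Qed.

Lemma excess_supermodular U1 U2 :
  excess U1 + excess U2 <= excess (U1 :&: U2)%VS + excess (U1 + U2)%VS.
Proof.
rewrite /excess; have := dimvS (Gamma_add_sub U1 U2).
have := dim_Gamma_grassmann U1 U2; have := dimv_sum_cap U1 U2; lia.
Qed.

(* Excess is bounded above, so a maximizer exists. *)
Lemma max_excess_exists : exists U0, max_excess U0.
Proof.
pose dV := \dim (fullv : {vspace FV S}); pose dE := \dim (fullv : {vspace FE S}).
pose shifted U := (\dim (Gamma_ht U) + dV - \dim U)%N.
have [|U U_max] := @bounded_argmax _ shifted (dE + dV) 0%VS.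
  by move=> U; rewrite /shifted; have := dimvS (subvf (Gamma_ht U)); lia.
exists U => U'; have := U_max U'; rewrite /shifted /excess.
have := dimvS (subvf U); have := dimvS (subvf U'); lia.
Qed.

Section Maximizers.
Variables U1 U2 : {vspace FV S}.
Hypotheses (max1 : max_excess U1) (max2 : max_excess U2).

(* For maximizers the supermodular inequality is an equality of maxima. *)
Lemma max_excess_cap_add : max_excess (U1 :&: U2)%VS /\ max_excess (U1 + U2)%VS.
Proof.
have := excess_supermodular U1 U2; have := max1 U2; have := max2 U1.
have := max1 (U1 :&: U2)%VS; have := max1 (U1 + U2)%VS.
by move=> *; split=> U; have := max1 U; lia.
Qed.

Lemma Gamma_add_max : Gamma_ht (U1 + U2)%VS = (Gamma_ht U1 + Gamma_ht U2)%VS.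
Proof.
apply/eqP; rewrite eq_sym eqEdim Gamma_add_sub /=.
have := excess_supermodular U1 U2; have := max1 U2; have := max2 U1.
have := max1 (U1 :&: U2)%VS; have := max1 (U1 + U2)%VS; rewrite /excess.
have := dim_Gamma_grassmann U1 U2; have := dimv_sum_cap U1 U2; lia.
Qed.

End Maximizers.

(* The maximizers form a lattice; a maximizer of largest dimension is greatest. *)
Lemma max_excess_greatest :
  exists Umax, max_excess Umax /\ forall U, max_excess U -> (U <= Umax)%VS.
Proof.
have [U0 U0_max] := max_excess_exists.
pose T := {M : {vspace FV S} | max_excess M}.
have [|[U U_max] U_big] :=
  @bounded_argmax T (fun M => \dim (sval M)) (\dim (fullv : {vspace FV S}))
                  (exist _ U0 U0_max).
  by move=> M; exact: dimvS (subvf (sval M)).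
exists U; split=> // V V_max.
have [_ UV_max] := max_excess_cap_add U V U_max V_max.
have /eqP -> : (U == U + V)%VS.
  by rewrite eqEdim addvSl; exact: (U_big (exist _ (U + V)%VS UV_max)).
exact: addvSr.
Qed.

(* Dually, a maximizer of smallest dimension is least. *)
Lemma max_excess_least :
  exists Umin, max_excess Umin /\ forall U, max_excess U -> (Umin <= U)%VS.
Proof.
have [U0 U0_max] := max_excess_exists.
pose T := {M : {vspace FV S} | max_excess M}.
pose codim U := (\dim (fullv : {vspace FV S}) - \dim U)%N.
have [|[U U_max] U_small] :=
  @bounded_argmax T (fun M => codim (sval M)) (\dim (fullv : {vspace FV S}))
                  (exist _ U0 U0_max).
  by move=> M; exact: leq_subr.
exists U; split=> // V V_max.
have [UV_max _] := max_excess_cap_add U V U_max V_max.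
have /eqP <- : (U :&: V == U)%VS.
  rewrite eqEdim capvSl /=; have := U_small (exist _ (U :&: V)%VS UV_max); rewrite /codim /=.
  by have := dimvS (subvf U); have := dimvS (subvf (U :&: V)%VS); lia.
exact: capvSr.
Qed.

End SheafGamma.

Theorem theorem1 (K : fieldType) (G : digraph) (S : sheaf K G) :
  [/\ (forall U1 U2 : {vspace FV S},
         excess U1 + excess U2 <= excess (U1 :&: U2)%VS + excess (U1 + U2)%VS),
      (forall U1 U2 : {vspace FV S}, max_excess U1 -> max_excess U2 ->
         max_excess (U1 :&: U2)%VS /\ max_excess (U1 + U2)%VS),
      (exists Umax : {vspace FV S}, max_excess Umax /\
         forall U, max_excess U -> (U <= Umax)%VS),
      (exists Umin : {vspace FV S}, max_excess Umin /\
         forall U, max_excess U -> (Umin <= U)%VS)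
    & (forall U1 U2 : {vspace FV S}, max_excess U1 -> max_excess U2 ->
         Gamma_ht (U1 + U2)%VS = (Gamma_ht U1 + Gamma_ht U2)%VS)].
Proof.
split.
- exact: excess_supermodular.
- exact: max_excess_cap_add.
- exact: max_excess_greatest.
- exact: max_excess_least.
- exact: Gamma_add_max.
Qed.
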